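(* Let $(X,\rho)$, $X_0$, $\mu_x^U$, $\mathcal H(U)$, $\mathcal U_0$ be as in the context, and suppose that there exist $\alpha\in(0,1)$ and $K\ge1$ such that for all $U(x_0,R)\in\mathcal U_0$ and all $h\in\mathcal H_b^+(U(x_0,R))$ one has $\sup_{U(x_0,\alpha R)}h\le K\inf_{U(x_0,\alpha R)}h$. Then: 1. For all $U(x_0,R)\in\mathcal U_0$ and all $h\in\mathcal H^+(U(x_0,R))$, $\sup_{U(x_0,\alpha R)}h\le K\inf_{U(x_0,\alpha R)}h$. 2. If for all $U\in\mathcal U(X_0)$ the functions in $\mathcal H_b^+(U)$ are continuous on $U$, then for all $U\in\mathcal U(X_0)$ the functions in $\mathcal H^+(U)$ are continuous on $U$.
   Context: $(X,\rho)$ is a separable metric space; $\mathcal M(X)$ denotes the finite Borel measures on $X$ (also regarded on universally measurable sets), $\|\mu\|:=\mu(X)$, $\varepsilon_x$ the Dirac measure. For open $Y\subseteq X$, $\mathcal U(Y)$ is the set of open $U$ with $\overline U\subseteq Y$. $X_0\subseteq X$ is open. For every $x\in X$ and $U\in\mathcal U(X_0)$ a measure $\mu_x^U\in\mathcal M(X)$ is given such that for all $x$ and $U,V\in\mathcal U(X_0)$: (M0) $\mu_x^U(U)=0$, $\|\mu_x^U\|\le1$, $\mu_x^U=\varepsilon_x$ if $x\notin U$; (M1) $y\mapsto\mu_y^U(E)$ is universally measurable for every Borel $E$, and $\mu_x^U=\int\mu_y^U\,d\mu_x^V(y)$ whenever $V\subseteq U$. For $U\in\mathcal U(X_0)$,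 $\mathcal H(U)$ is the set of universally measurable real functions $h$ on $X$ such that for all $V\in\mathcal U(U)$ and $x\in V$, $h$ is $\mu_x^V$-integrable with $\int h\,d\mu_x^V=h(x)$; $\mathcal H^+(U)$, $\mathcal H_b^+(U)$ are its nonnegative, resp. bounded nonnegative, elements. $U(x,r)$ is the open $\rho$-ball, $R_0(x):=\sup\{r>0:\overline{U(x,r)}\subseteq X_0\}$ for $x\in X_0$, and $\mathcal U_0:=\{U(x,r):x\in X_0,\ r<R_0(x)\}$. *)

From HB Require Import structures.
From mathcomp Require Import all_boot all_order all_algebra.
From mathcomp Require Import all_classical all_reals all_analysis measurable_realfun.
Set Implicit Arguments. Unset Strict Implicit. Unset Printing Implicit Defensive.
Import Order.TTheory GRing.Theory Num.Theory.
Local Open Scope classical_set_scope.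
Local Open Scope ring_scope.

Section defs.
Context {d : measure_display} {X : measurableType d} {R : realType}.
Implicit Types (rho : X -> X -> R).

Definition is_metric rho : Prop :=
  [/\ (forall x y, 0 <= rho x y), (forall x y, rho x y = 0 <-> x = y),
      (forall x y, rho x y = rho y x) &
      (forall x y z, rho x z <= rho x y + rho y z)].

Definition rball rho (x : X) (r : R) : set X := [set y | rho x y < r].

Definition ropen rho (U : set X) : Prop :=
  forall x, U x -> exists r : R, 0 < r /\ rball rho x r `<=` U.

Definition rclosure rho (A : set X) : set X :=
  [set x | forall r : R, 0 < r -> exists y, A y /\ rho x y < r].

Definition rseparable rho : Prop :=
  exists D : set X, countable D /\
    forall x (r : R), 0 < r -> exists y, D y /\ rho x y < r.

Definition rborel rho : Prop :=
  forall A : set X, measurable A <-> <<s ropen rho >> A.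

Definition rcont_on rho (U : set X) (h : X -> R) : Prop :=
  forall x, U x -> forall e : R, 0 < e -> exists dl : R, 0 < dl /\
    forall y, U y -> rho x y < dl -> `|h y - h x| < e.

Definition calU rho (Y U : set X) : Prop := ropen rho U /\ rclosure rho U `<=` Y.

Definition R0 rho (X0 : set X) (x : X) : \bar R :=
  ereal_sup [set r%:E | r in [set r : R | 0 < r /\ rclosure rho (rball rho x r) `<=` X0]].

Definition umeas (A : set X) : Prop :=
  forall nu : {measure set X -> \bar R}, (nu setT < +oo)%E ->
    exists B C : set X, [/\ measurable B, measurable C, B `<=` A, A `<=` C &
                            nu (C `\` B) = 0%E].

Definition umeas_fun (h : X -> R) : Prop :=
  forall B : set R, measurable B -> umeas (h @^-1` B).

Definition umeas_efun (f : X -> \bar R) : Prop :=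
  forall B : set (\bar R), measurable B -> umeas (f @^-1` B).

Definition cintegrable (nu : {measure set X -> \bar R}) (h : X -> R) : Prop :=
  (@completed_measure_extension _ _ _ nu).-integrable setT (fun x => (h x)%:E).

Definition cintegral (nu : {measure set X -> \bar R}) (f : X -> \bar R) : \bar R :=
  (\int[@completed_measure_extension _ _ _ nu]_x f x)%E.

(** hypotheses (M0), (M1) on the family mu U x = mu_x^U *)
Definition M0 rho (X0 : set X) (mu : set X -> X -> {measure set X -> \bar R}) : Prop :=
  forall (x : X) (U : set X), calU rho X0 U ->
    [/\ mu U x U = 0%E, (mu U x setT <= 1)%E &
        (~ U x -> forall E, measurable E -> mu U x E = \d_x E)].

Definition M1 rho (X0 : set X) (mu : set X -> X -> {measure set X -> \bar R}) : Prop :=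
  forall (x : X) (U V : set X), calU rho X0 U -> calU rho X0 V ->
    (forall E, measurable E -> umeas_efun (fun y => mu U y E)) /\
    (V `<=` U -> forall E, measurable E ->
        mu U x E = cintegral (mu V x) (fun y => mu U y E)).

Definition Hset rho (mu : set X -> X -> {measure set X -> \bar R}) (U : set X)
  (h : X -> R) : Prop :=
  umeas_fun h /\
  forall V, calU rho U V -> forall x, V x ->
    cintegrable (mu V x) h /\ cintegral (mu V x) (fun y => (h y)%:E) = (h x)%:E.

Definition Hplus rho mu U h : Prop := Hset rho mu U h /\ forall x, 0 <= h x.

Definition Hbplus rho mu U h : Prop :=
  Hplus rho mu U h /\ exists M : R, forall x, h x <= M.

Definition harnack_ineq rho (x0 : X) (r K : R) (h : X -> R) : Prop :=
  (ereal_sup [set (h y)%:E | y in rball rho x0 r] <=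
   K%:E * ereal_inf [set (h y)%:E | y in rball rho x0 r])%E.

End defs.

From HB Require Import structures.
From mathcomp Require Import all_boot all_order all_algebra.
From mathcomp Require Import all_classical all_reals all_analysis measurable_realfun.
From mathcomp Require Import ring lra.
Import Order.TTheory GRing.Theory Num.Theory.
Local Open Scope classical_set_scope.
Local Open Scope ring_scope.
Import HBNNSimple.

(* For a ball V = U(x0,r) of U_0 and a Borel set E, the function
   y |-> mu_y^V(E) is bounded and harmonic in V by (M1), so the Harnack
   hypothesis gives mu_y^V <= K mu_z^V for y, z in U(x0, alpha r).  This
   domination passes to the outer measures, hence to integrals against the
   completed measures of nonnegative universally measurable functions.  As
   h(y) = int h dmu_y^V for h in H^+, shrinking r slightly so that y and z stay
   in U(x0, alpha r) yields part 1.
   For part 2, fix x in U and a small ball V around x, and split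
   h(y) = int a dmu_y^V + int (h - a) dmu_y^V with a a dyadic approximation of
   h from below.  The first term is a finite combination of outer measures
   mu_y^V(A); by the domination each universally measurable A can be replaced
   by one Borel set for all y near x, so this term is continuous at x by the
   hypothesis on bounded harmonic functions.  The second term is at most K
   times its value at x, which is small by monotone convergence. *)

Section dyadic_approximation.
Context {d : measure_display} {T : measurableType d} {R : realType}.
Variables (m : {measure set T -> \bar R}) (f : T -> \bar R).
Hypothesis mf : measurable_fun setT f.
Local Open Scope ereal_scope.

Lemma approx_ge0 n x : (0 <= approx setT f n x)%R.
Proof.
by rewrite /approx addr_ge0 ?sumr_ge0 // => k _; rewrite mulr_ge0 // indicE.
Qed.

Lemma measurable_approx n : measurable_fun setT (approx setT f n).
Proof. by rewrite -(nnsfun_approxE measurableT mf); exact: measurable_funPT. Qed.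

Lemma integral_approx n :
  \int[m]_x (approx setT f n x)%:E =
  \sum_(k < n * 2 ^ n) (k%:R * 2 ^- n)%:E * m (dyadic_approx setT f n k) +
  n%:R%:E * m (integer_approx setT f n).
Proof.
have mA k : measurable (dyadic_approx setT f n k).
  rewrite /dyadic_approx; case: ifPn => [kn|_]//; rewrite -preimage_comp.
  by apply: mf => //; apply/measurable_image_EFin; exact: measurable_itv.
have mB : measurable (integer_approx setT f n) by exact: emeasurable_fun_c_infty.
have mZ_indic (c : R) (A : set T) : measurable A ->
    measurable_fun setT (fun x => (c * \1_A x)%R%:E).
  by move=> mA'; apply/measurable_EFinP; apply: measurable_funM.
have integralZ_indic (c : R) (A : set T) : (0 <= c)%R -> measurable A ->
    \int[m]_x (c * \1_A x)%R%:E = c%:E * m A.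
  move=> c0 mA'; under eq_integral => x _ do rewrite EFinM.
  rewrite ge0_integralZl_EFin // ?integral_indic ?setIT //.
  by apply/measurable_EFinP; exact: measurable_indic.
rewrite /approx; under eq_integral => x _ do rewrite EFinD -sumEFin.
rewrite ge0_integralD //; last 3 first.
- by move=> x _; apply: sume_ge0 => k _; rewrite lee_fin mulr_ge0 // indicE.
- by apply: emeasurable_sum => k; exact: mZ_indic.
- exact: mZ_indic.
rewrite ge0_integral_sum //; last by move=> k; exact: mZ_indic.
congr (_ + _); last exact: integralZ_indic.
by apply: eq_bigr => k _; exact: integralZ_indic.
Qed.

Hypothesis f0 : forall x, 0 <= f x.

Lemma cvg_integral_approx :
  (fun n => \int[m]_x (approx setT f n x)%:E) @ \oo --> \int[m]_x f x.
Proof.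
have -> : \int[m]_x f x = \int[m]_x limn (fun n => (approx setT f n x)%:E).
  apply: eq_integral => x _; apply/esym/cvg_lim => //.
  exact: (ecvg_approx (fun x _ => f0 x)).
apply: cvg_monotone_convergence => //.
- by move=> n; apply/measurable_EFinP; exact: measurable_approx.
- by move=> n x _; rewrite lee_fin approx_ge0.
- by move=> x _ a b ab; rewrite lee_fin; move: (nd_approx setT f ab) => /asboolP; apply.
Qed.

Lemma integral_approx_gt (l : \bar R) : l < \int[m]_x f x ->
  exists n, l < \int[m]_x (approx setT f n x)%:E.
Proof.
move=> lf; apply: contrapT => /forallNP approx_le.
suff : \int[m]_x f x <= l by rewrite leNgt lf.
rewrite -(cvg_lim _ cvg_integral_approx) //; apply: lime_le.
  by apply/cvg_ex; eexists; exact: cvg_integral_approx.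
by apply: nearW => n; rewrite leNgt; apply/negP; exact: approx_le.
Qed.

End dyadic_approximation.

Section completion.
Context {d : measure_display} {X : measurableType d} {R : realType}.
Local Open Scope ereal_scope.
Implicit Types (m : {measure set X -> \bar R}) (A : set X).
Local Notation CT m := (caratheodory_type (mu_ext m)).

Lemma measurable_umeas A : measurable A -> @umeas _ _ R A.
Proof. by move=> mA nu _; exists A, A; split => //; rewrite setDv measure0. Qed.

Lemma umeas_caratheodory m A : m setT < +oo -> @umeas _ _ R A ->
  (mu_ext m).-cara.-measurable A.
Proof.
move=> mfin /(_ m mfin) [B [C [mB mC BA AC CB0]]].
have -> : A = B `|` (A `\` B).
  apply/seteqP; split => x; first by case: (pselect (B x)) => ?; [left|right].
  by case => [/BA|[]].
apply: caratheodory_measurable_setU; first exact: caratheodory_measurable_mu_ext.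
apply: (measure_is_complete_caratheodory (mu := mu_ext m)).
exists (C `\` B); split.
- exact/caratheodory_measurable_mu_ext/measurableD.
- by rewrite -CB0; apply: measurable_mu_extE; exact: measurableD.
- by move=> x [/AC].
Qed.

Lemma umeas_fun_measurable m (f : X -> R) : m setT < +oo -> @umeas_fun _ _ R f ->
  measurable_fun (setT : set (CT m)) f.
Proof.
by move=> mfin uf _ B mB; rewrite setTI; apply: umeas_caratheodory => //; exact: uf.
Qed.

Lemma umeas_fun_emeasurable m (f : X -> R) : m setT < +oo -> @umeas_fun _ _ R f ->
  measurable_fun (setT : set (CT m)) (EFin \o f).
Proof. by move=> mfin uf; apply: measurableT_comp => //; exact: umeas_fun_measurable. Qed.

Lemma le_mu_ext_dominated m1 m2 (c : R) : (0 < c)%R ->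
  (forall E, measurable E -> m1 E <= c%:E * m2 E) ->
  forall A, mu_ext m1 A <= c%:E * mu_ext m2 A.
Proof.
move=> c0 m12 A; rewrite -lee_pdivrMl //.
apply: le_ereal_inf_tmp => _ [F FA <-].
rewrite lee_pdivrMl // -nneseriesZl; last by move=> *; exact: measure_ge0.
apply: (@le_trans _ _ (\sum_(k <oo) m1 (F k))).
  by apply: ereal_inf_lbound; exists F.
apply: lee_nneseries; first by move=> *; exact: measure_ge0.
by move=> k _; apply: m12; case: FA.
Qed.

(* The completions of [m1] and [m2] live on different sigma-algebras; they are
   compared through the dyadic approximations of [f], whose integrals are finite
   combinations of outer measures of the same sets. *)
Lemma le_cintegral_dominated m1 m2 (c : R) (f : X -> \bar R) : (0 < c)%R ->
  (forall E, measurable E -> m1 E <= c%:E * m2 E) ->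
  (forall x, 0 <= f x) ->
  measurable_fun (setT : set (CT m1)) f -> measurable_fun (setT : set (CT m2)) f ->
  cintegral m1 f <= c%:E * cintegral m2 f.
Proof.
move=> c0 m12 f0 mf1 mf2; have m12ext := le_mu_ext_dominated m1 m2 c c0 m12.
have cvg1 := cvg_integral_approx (completed_measure_extension (mu := m1)) _ mf1 f0.
rewrite /cintegral -(cvg_lim _ cvg1) //; apply: lime_le.
  by apply/cvg_ex; eexists; exact: cvg1.
apply: nearW => n; rewrite integral_approx //.
apply: (@le_trans _ _ (c%:E * \int[completed_measure_extension (mu := m2)]_x
    (approx setT f n x)%:E)); last first.
  apply: lee_wpmul2l; first by rewrite lee_fin ltW.
  apply: ge0_le_integral => //.
  - by move=> x _; rewrite lee_fin approx_ge0.
  - by apply/measurable_EFinP; exact: measurable_approx.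
  - by move=> x _; exact: le_approx.
rewrite integral_approx // ge0_muleDr; first last.
- by apply: mule_ge0 => //; exact: measure_ge0.
- by apply: sume_ge0 => k _; apply: mule_ge0 => //; exact: measure_ge0.
apply: leeD.
  rewrite ge0_sume_distrr; last by move=> k _; apply: mule_ge0 => //; exact: measure_ge0.
  by apply: lee_sum => k _; rewrite muleCA; apply: lee_wpmul2l => //; exact: m12ext.
by rewrite muleCA; apply: lee_wpmul2l => //; exact: m12ext.
Qed.

Lemma mu_ext_umeas_dominated (mx : {measure set X -> \bar R}) (K : R) A :
  (0 <= K)%R -> mx setT < +oo -> @umeas _ _ R A ->
  exists2 B, measurable B & forall my : {measure set X -> \bar R},
    (forall E, measurable E -> my E <= K%:E * mx E) -> mu_ext my A = my B.
Proof.
move=> K0 mxfin /(_ mx mxfin) [B [C [mB mC BA AC CB0]]].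
exists B => // my myx.
have mCB : measurable (C `\` B) by exact: measurableD.
have myCB0 : my (C `\` B) = 0.
  apply/eqP; rewrite eq_le measure_ge0 andbT.
  by apply: (le_trans (myx _ mCB)); rewrite CB0 mule0.
apply/eqP; rewrite eq_le; apply/andP; split; last first.
  by rewrite -measurable_mu_extE //; exact: le_mu_ext.
apply: (@le_trans _ _ (mu_ext my C)); first exact: le_mu_ext.
have BC : B `|` (C `\` B) = C by rewrite setDUK //; exact: subset_trans AC.
rewrite measurable_mu_extE // -{1}BC measureU //.
- by rewrite [X in _ + X](_ : _ = 0) ?adde0.
- by rewrite setDIK.
Qed.

End completion.

Section umeas_approx.
Context {d : measure_display} {X : measurableType d} {R : realType}.
Variable h : X -> R.
Hypothesis uh : @umeas_fun _ _ R h.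

Lemma umeas_dyadic_approx n k : @umeas _ _ R (dyadic_approx setT (EFin \o h) n k).
Proof.
rewrite /dyadic_approx; case: ifPn => _; last exact: measurable_umeas.
have -> : setT `&` [set x | (EFin \o h) x \in EFin @` [set` dyadic_itv R n k]] =
    h @^-1` [set` dyadic_itv R n k].
  apply/seteqP; split => [z [_ /set_mem [r rI [rh]]]|z hz]; first by rewrite /= -rh.
  by split => //; apply/mem_set; exists (h z).
exact: uh (measurable_itv _).
Qed.

Lemma umeas_integer_approx n : @umeas _ _ R (integer_approx setT (EFin \o h) n).
Proof.
have -> : integer_approx setT (EFin \o h) n = h @^-1` [set` `[n%:R, +oo[%R].
  apply/seteqP; split => z /=; rewrite in_itv /= andbT.
  - by move=> [_] /=; rewrite lee_fin.
  - by move=> hz; split => //=; rewrite lee_fin.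
exact: uh (measurable_itv _).
Qed.

End umeas_approx.

Section pointwise_continuity.
Context {d : measure_display} {X : measurableType d} {R : realType}.
Variable rho : X -> X -> R.

Definition rcont_at (x : X) (g : X -> R) := forall e, 0 < e ->
  exists2 dl, 0 < dl & forall y, rho x y < dl -> `|g y - g x| < e.

Definition fin_rcont_at (x : X) (P : set X) (F : X -> \bar R) :=
  exists2 g, rcont_at x g & forall y, P y -> F y = (g y)%:E.

End pointwise_continuity.

Section metric.
Context {d : measure_display} {X : measurableType d} {R : realType}.
Context {rho : X -> X -> R} (mr : is_metric rho).

Lemma rho_ge0 x y : 0 <= rho x y. Proof. by case: mr. Qed.
Lemma rho_xx x : rho x x = 0. Proof. by case: mr => _ h _ _; apply/h. Qed.
Lemma rhoC x y : rho x y = rho y x. Proof. by case: mr. Qed.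
Lemma rho_triangle x y z : rho x z <= rho x y + rho y z. Proof. by case: mr. Qed.

Lemma rball_center x r : 0 < r -> rball rho x r x.
Proof. by rewrite /rball /= rho_xx. Qed.

Lemma subset_rball x r1 r2 : r1 <= r2 -> rball rho x r1 `<=` rball rho x r2.
Proof. by move=> r12 y; rewrite /rball /= => /lt_le_trans; apply. Qed.

Lemma rball_ropen x r : ropen rho (rball rho x r).
Proof.
move=> y yb; exists (r - rho x y); split; first by rewrite subr_gt0.
move=> z; rewrite /rball /= => yz.
by apply: le_lt_trans (rho_triangle x y z) _; rewrite -ltrBrDl.
Qed.

Lemma subset_rclosure (A : set X) : A `<=` rclosure rho A.
Proof. by move=> x Ax r r0; exists x; rewrite rho_xx. Qed.

Lemma rclosureS (A B : set X) : A `<=` B -> rclosure rho A `<=` rclosure rho B.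
Proof.
by move=> AB x Ax r r0; have [y [Ay xy]] := Ax r r0; exists y; split => //; exact: AB.
Qed.

Lemma rclosure_rball_lt x r r' : r' < r ->
  rclosure rho (rball rho x r') `<=` rball rho x r.
Proof.
move=> r'r z /(_ (r - r')); rewrite subr_gt0 => /(_ r'r) [y [xy zy]].
rewrite /rball /=; apply: le_lt_trans (rho_triangle x y z) _.
by rewrite rhoC in zy; move: xy zy; rewrite /rball /=; lra.
Qed.

Lemma calU_rball {U x r r'} : 0 < r' -> r' < r -> rball rho x r `<=` U ->
  calU rho U (rball rho x r').
Proof.
move=> r'0 r'r xrU; split; first exact: rball_ropen.
by apply: subset_trans xrU; exact: rclosure_rball_lt.
Qed.

Lemma calU_subset {X0 U : set X} : calU rho X0 U -> U `<=` X0.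
Proof. by move=> [_ cU]; apply: subset_trans cU; exact: subset_rclosure. Qed.

Lemma calU_trans {X0 U V : set X} : calU rho X0 U -> calU rho U V -> calU rho X0 V.
Proof. by move=> cU [oV cV]; split => //; exact: subset_trans cV (calU_subset cU). Qed.

Lemma lt_R0 (X0 : set X) x r s : 0 < s -> r < s ->
  rclosure rho (rball rho x s) `<=` X0 -> (r%:E < R0 rho X0 x)%E.
Proof.
move=> s0 rs sX0; apply: (@lt_le_trans _ _ s%:E); first by rewrite lte_fin.
by apply: ereal_sup_ubound; exists s.
Qed.

Lemma calU_rball_R0 {X0 : set X} {x r} : (r%:E < R0 rho X0 x)%E ->
  calU rho X0 (rball rho x r).
Proof.
move=> /ereal_sup_gt [_ [s [s0 sX0] <-]]; rewrite lte_fin => rs.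
split; first exact: rball_ropen.
by apply: subset_trans sX0; apply: rclosureS; exact: subset_rball (ltW rs).
Qed.

Lemma harnack_ineq_le {x0 r K} {h : X -> R} : 0 < r -> 0 < K ->
  (forall y z, rball rho x0 r y -> rball rho x0 r z -> h y <= K * h z) ->
  harnack_ineq rho x0 r K h.
Proof.
move=> r0 K0 hyz; rewrite /harnack_ineq.
set S := [set (h y)%:E | y in rball rho x0 r].
have supS_le z : rball rho x0 r z -> (ereal_sup S <= (K * h z)%:E)%E.
  by move=> zb; apply: ge_ereal_sup => _ [y yb <-]; rewrite lee_fin; exact: hyz.
case eS : (ereal_sup S) => [s| |]; last by rewrite leNye.
  rewrite -[s](@mulfVK _ K) ?gt_eqF // mulrC EFinM.
  apply: lee_wpmul2l; first by rewrite lee_fin ltW.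
  apply: le_ereal_inf_tmp => _ [z zb <-]; rewrite lee_fin ler_pdivrMr // mulrC.
  by have := supS_le z zb; rewrite eS lee_fin.
by have := supS_le x0 (rball_center x0 r r0); rewrite eS leye_eq.
Qed.

Lemma rcont_at_cst x (c : R) : rcont_at rho x (fun=> c).
Proof. by move=> e e0; exists 1 => // y _; rewrite subrr normr0. Qed.

Lemma rcont_atD {x f g} : rcont_at rho x f -> rcont_at rho x g -> rcont_at rho x (f \+ g).
Proof.
move=> cf cg e e0; have e20 : 0 < e / 2 by rewrite divr_gt0.
have [d1 d10 fd1] := cf _ e20; have [d2 d20 gd2] := cg _ e20.
exists (Num.min d1 d2) => [|y]; first by rewrite lt_min d10.
rewrite lt_min => /andP [y1 y2]; have := fd1 y y1; have := gd2 y y2.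
by rewrite /= !ltr_norml => /andP [? ?] /andP [? ?]; apply/andP; split; lra.
Qed.

Lemma rcont_atMl {x} (c : R) {f} : rcont_at rho x f -> rcont_at rho x (fun y => c * f y).
Proof.
move=> cf e e0.
have ce0 : 0 < e / (`|c| + 1) by rewrite divr_gt0 // ltr_wpDl.
have [dl dl0 fdl] := cf _ ce0; exists dl => // y xy.
rewrite -mulrBr normrM; apply: (@le_lt_trans _ _ ((`|c| + 1) * `|f y - f x|)).
  by rewrite ler_wpM2r // lerDl.
by rewrite mulrC -ltr_pdivlMr ?ltr_wpDl //; exact: fdl.
Qed.

Lemma rcont_at_squeeze x h :
  (forall eta, 0 < eta -> exists2 s, rcont_at rho x s & exists2 dl, 0 < dl &
     forall y, rho x y < dl -> s y <= h y <= s y + eta) ->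
  rcont_at rho x h.
Proof.
move=> hs e e0; have e30 : 0 < e / 3 by rewrite divr_gt0.
have [s cs [d1 d10 shd1]] := hs _ e30; have [d2 d20 sd2] := cs _ e30.
exists (Num.min d1 d2) => [|y]; first by rewrite lt_min d10.
rewrite lt_min => /andP [y1 y2].
have /andP [? ?] := shd1 y y1; have /andP [? ?] := shd1 x (rball_center x d1 d10).
by move: (sd2 y y2); rewrite !ltr_norml => /andP [? ?]; apply/andP; split; lra.
Qed.

Lemma eq_fin_rcont_at {x P F G} : (forall y, P y -> F y = G y) ->
  fin_rcont_at rho x P F -> fin_rcont_at rho x P G.
Proof. by move=> FG [g cg Fg]; exists g => // y Py; rewrite -FG ?Fg. Qed.

Lemma fin_rcont_atD {x P F G} : fin_rcont_at rho x P F -> fin_rcont_at rho x P G ->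
  fin_rcont_at rho x P (fun y => F y + G y)%E.
Proof.
move=> [f cf Ff] [g cg Gg]; exists (f \+ g); first exact: rcont_atD.
by move=> y Py; rewrite Ff ?Gg.
Qed.

Lemma fin_rcont_atMl {x P} (c : R) {F} : fin_rcont_at rho x P F ->
  fin_rcont_at rho x P (fun y => c%:E * F y)%E.
Proof.
move=> [f cf Ff]; exists (fun y => c * f y); first exact: rcont_atMl.
by move=> y Py; rewrite Ff.
Qed.

Lemma fin_rcont_at_sum x P N (c : nat -> R) (F : nat -> X -> \bar R) :
  (forall k, fin_rcont_at rho x P (F k)) ->
  fin_rcont_at rho x P (fun y => \sum_(k < N) (c k)%:E * F k y)%E.
Proof.
move=> cF; elim: N => [|N IHN].
  by exists (fun=> 0) => [|y _]; [exact: rcont_at_cst | rewrite big_ord0].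
apply: (eq_fin_rcont_at _ (fin_rcont_atD IHN (fin_rcont_atMl (c N) (cF N)))).
by move=> y _; rewrite big_ord_recr.
Qed.

End metric.

Lemma shrink_radius {R : realFieldType} (alpha r m : R) :
  0 < alpha -> 0 <= m -> m < alpha * r -> exists2 r', 0 < r' < r & m < alpha * r'.
Proof.
move=> alpha_gt0 m_ge0 m_lt.
have arE : alpha * ((m / alpha + r) / 2) = (m + alpha * r) / 2.
  by field; rewrite gt_eqF.
have m_alpha_lt : m / alpha < r by rewrite ltr_pdivrMr // mulrC.
have m_alpha_ge0 : 0 <= m / alpha by rewrite divr_ge0 // ltW.
by exists ((m / alpha + r) / 2); [apply/andP; split; lra | rewrite arE; lra].
Qed.

Section harmonic_measure.
Context {d : measure_display} {X : measurableType d} {R : realType}.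
Context {rho : X -> X -> R} {X0 : set X} {mu : set X -> X -> {measure set X -> \bar R}}.
Hypotheses (mr : is_metric rho) (hM0 : M0 rho X0 mu) (hM1 : M1 rho X0 mu).
Local Notation CT m := (caratheodory_type (mu_ext m)).

Lemma harmonic_measure_le1 {V} y {E} : calU rho X0 V -> measurable E ->
  (mu V y E <= 1)%E.
Proof.
move=> cV mE; have [_ muT_le1 _] := hM0 y V cV.
by apply: le_trans muT_le1; apply: le_measure => //; rewrite inE.
Qed.

Lemma harmonic_measure_fin_num {V} y {E} : calU rho X0 V -> measurable E ->
  mu V y E \is a fin_num.
Proof.
move=> cV mE; rewrite ge0_fin_numE ?measure_ge0 //.
exact: le_lt_trans (harmonic_measure_le1 y cV mE) (ltry _).
Qed.

Lemma harmonic_measure_setT_lty {V} y : calU rho X0 V -> (mu V y setT < +oo)%E.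
Proof.
by move=> cV; exact: le_lt_trans (harmonic_measure_le1 y cV measurableT) (ltry _).
Qed.

Lemma Hbplus_harmonic_measure {V E} : calU rho X0 V -> measurable E ->
  Hbplus rho mu V (fun y => fine (mu V y E)).
Proof.
move=> cV mE; have muE_fin y := harmonic_measure_fin_num y cV mE.
have uE : @umeas_fun _ _ R (fun y => fine (mu V y E)).
  move=> B mB.
  have -> : (fun y => fine (mu V y E)) @^-1` B = (fun y => mu V y E) @^-1` (EFin @` B).
    apply/seteqP; split => y /= => [By|[r Br rE]]; last by rewrite -rE.
    by exists (fine (mu V y E)) => //; rewrite fineK.
  exact: (hM1 point V V cV cV).1 E mE (EFin @` B) (measurable_image_EFin mB).
split; last by exists 1 => y; rewrite -lee_fin fineK //; exact: harmonic_measure_le1.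
split; last by move=> y; rewrite fine_ge0 // measure_ge0.
split => // W cW x Wx; have cWX0 := calU_trans mr cV cW.
have intE : cintegral (mu W x) (fun y => (fine (mu V y E))%:E) = (fine (mu V x E))%:E.
  rewrite /cintegral; under eq_integral do rewrite fineK //.
  by rewrite fineK // ((hM1 x V W cV cWX0).2 (calU_subset mr cW) E mE).
split => //; apply/integrableP; split.
  exact: umeas_fun_emeasurable (harmonic_measure_setT_lty x cWX0) uE.
under eq_integral do rewrite gee0_abs ?lee_fin ?fine_ge0 ?measure_ge0 //.
by move: intE; rewrite /cintegral => ->; exact: ltry.
Qed.

Section harmonic_continuity.
Context {K : R} {V : set X} {x : X} {ar : R}.
Hypotheses (K_gt0 : 0 < K) (cV : calU rho X0 V)
  (Hbplus_cont : forall g, Hbplus rho mu V g -> rcont_on rho V g)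
  (ar_gt0 : 0 < ar) (rball_sub : rball rho x ar `<=` V)
  (harnack_V : forall y, rball rho x ar y -> forall E, measurable E ->
     (mu V y E <= K%:E * mu V x E)%E).

Lemma fin_rcont_at_mu_ext A : @umeas _ _ R A ->
  fin_rcont_at rho x (rball rho x ar) (fun y => mu_ext (mu V y) A).
Proof.
move=> uA; have [B mB muAB] := mu_ext_umeas_dominated (mu V x) K A (ltW K_gt0)
  (harmonic_measure_setT_lty x cV) uA.
exists (fun y => fine (mu V y B)) => [e e0|y yb]; last first.
  by rewrite muAB ?fineK ?(harmonic_measure_fin_num y cV mB) //; exact: harnack_V.
have xV : V x := rball_sub x (rball_center mr x ar ar_gt0).
have [dl [dl0 Bdl]] := Hbplus_cont _ (Hbplus_harmonic_measure cV mB) x xV e e0.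
exists (Num.min dl ar) => [|y]; first by rewrite lt_min dl0.
by rewrite lt_min => /andP [ydl yar]; apply: Bdl ydl; exact: rball_sub.
Qed.

Lemma fin_rcont_at_cintegral_approx h n : @umeas_fun _ _ R h ->
  fin_rcont_at rho x (rball rho x ar)
    (fun y => cintegral (mu V y) (fun z => (approx setT (EFin \o h) n z)%:E)).
Proof.
move=> uh.
have dyadicP k := fin_rcont_at_mu_ext _ (umeas_dyadic_approx h uh n k).
have integerP := fin_rcont_at_mu_ext _ (umeas_integer_approx h uh n).
apply: (eq_fin_rcont_at _ (fin_rcont_atD
  (fin_rcont_at_sum x _ (n * 2 ^ n) (fun k => k%:R * 2 ^- n) _ dyadicP)
  (fin_rcont_atMl n%:R integerP))).
move=> y _; rewrite /cintegral integral_approx; first by [].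
exact: umeas_fun_emeasurable (harmonic_measure_setT_lty y cV) uh.
Qed.

Lemma rcont_at_harmonic h : @umeas_fun _ _ R h -> (forall y, 0 <= h y) ->
  (forall y, V y -> cintegral (mu V y) (fun z => (h z)%:E) = (h y)%:E) ->
  rcont_at rho x h.
Proof.
move=> uh h0 hV; apply: (rcont_at_squeeze mr) => eta eta0.
have xV : V x := rball_sub x (rball_center mr x ar ar_gt0).
have mh y : measurable_fun (setT : set (CT (mu V y))) (EFin \o h).
  exact: umeas_fun_emeasurable (harmonic_measure_setT_lty y cV) uh.
have [n approx_gt] : exists n,
    ((h x - eta / K)%:E <
     cintegral (mu V x) (fun z => (approx setT (EFin \o h) n z)%:E))%E.
  apply: integral_approx_gt; [exact: mh | by move=> z; rewrite lee_fin | ].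
  by rewrite -/(cintegral _ _) (hV x xV) lte_fin gtrBl divr_gt0.
have [s cs sE] := fin_rcont_at_cintegral_approx h n uh.
pose b z := h z - approx setT (EFin \o h) n z.
have b0 z : 0 <= b z.
  by rewrite subr_ge0 -lee_fin; apply: le_approx => // t _; rewrite lee_fin.
have mb y : measurable_fun (setT : set (CT (mu V y))) (EFin \o b).
  apply/measurable_EFinP; apply: measurable_funB.
    exact: umeas_fun_measurable (harmonic_measure_setT_lty y cV) uh.
  exact: measurable_approx.
have splitE y : cintegral (mu V y) (fun z => (h z)%:E) =
    (cintegral (mu V y) (fun z => (approx setT (EFin \o h) n z)%:E) +
     cintegral (mu V y) (EFin \o b))%E.
  rewrite /cintegral -ge0_integralD //.
  - by apply: eq_integral => z _; rewrite -EFinD /b addrC subrK.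
  - by move=> z _; rewrite lee_fin approx_ge0.
  - by apply/measurable_EFinP; exact: measurable_approx.
  - by move=> z _; rewrite lee_fin.
have bE y : rball rho x ar y -> cintegral (mu V y) (EFin \o b) = (h y - s y)%:E.
  move=> yb; have := hV y (rball_sub y yb); rewrite splitE sE // => hyE.
  by rewrite EFinB -hyE [(s y)%:E + _]addeC addeK.
exists s => //; exists ar => // y yb.
have xb := rball_center mr x ar ar_gt0.
have := le_cintegral_dominated (mu V y) (mu V x) K (EFin \o b) K_gt0
  (harnack_V y yb) (fun z => b0 z) (mb y) (mb x).
rewrite (bE y yb) (bE x xb) -EFinM lee_fin => hy_le.
have : (0 <= cintegral (mu V y) (EFin \o b))%E.
  by apply: integral_ge0 => z _; rewrite lee_fin.
rewrite (bE y yb) lee_fin => hy_ge.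
move: approx_gt; rewrite (sE x xb) lte_fin => hs_lt.
have Keta : K * (eta / K) = eta by rewrite mulrC divfK ?gt_eqF.
have : K * (h x - s x) < eta by rewrite -[X in _ < X]Keta ltr_pM2l //; lra.
by move=> ?; apply/andP; split; lra.
Qed.

End harmonic_continuity.

Section harnack.
Context {alpha K : R}.
Hypotheses (alpha_gt0 : 0 < alpha) (alpha_lt1 : alpha < 1) (K_gt0 : 0 < K).
Hypothesis harnack_bounded : forall (x0 : X) (r : R),
  X0 x0 -> 0 < r -> (r%:E < R0 rho X0 x0)%E ->
  forall h, Hbplus rho mu (rball rho x0 r) h -> harnack_ineq rho x0 (alpha * r) K h.

Lemma rball_scale_sub {x0 r} : 0 < r -> rball rho x0 (alpha * r) `<=` rball rho x0 r.
Proof. by move=> r0; apply: subset_rball; rewrite ger_pMl // ltW. Qed.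

Lemma harmonic_measure_harnack {x0 r y z} :
  X0 x0 -> 0 < r -> (r%:E < R0 rho X0 x0)%E ->
  rball rho x0 (alpha * r) y -> rball rho x0 (alpha * r) z -> forall E, measurable E ->
  (mu (rball rho x0 r) y E <= K%:E * mu (rball rho x0 r) z E)%E.
Proof.
move=> X0x0 r0 rR0 yb zb E mE; have cV := calU_rball_R0 mr rR0.
have := harnack_bounded x0 r X0x0 r0 rR0 _ (Hbplus_harmonic_measure cV mE).
rewrite /harnack_ineq -(fineK (harmonic_measure_fin_num y cV mE)).
rewrite -(fineK (harmonic_measure_fin_num z cV mE)) => harnackE.
apply: le_trans (le_trans harnackE _); first by apply: ereal_sup_ubound; exists y.
apply: lee_wpmul2l; first by rewrite lee_fin ltW.
by apply: ereal_inf_lbound; exists z.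
Qed.

Lemma Hplus_harnack_le x0 r h : X0 x0 -> 0 < r -> (r%:E < R0 rho X0 x0)%E ->
  Hplus rho mu (rball rho x0 r) h ->
  forall y z, rball rho x0 (alpha * r) y -> rball rho x0 (alpha * r) z ->
  h y <= K * h z.
Proof.
move=> X0x0 r0 rR0 [[uh hU] h0] y z yb zb.
have [r' /andP [r'0 r'r]] : exists2 r', 0 < r' < r &
    Num.max (rho x0 y) (rho x0 z) < alpha * r'.
  by apply: shrink_radius; rewrite ?le_max ?(rho_ge0 mr) // gt_max yb.
rewrite gt_max => /andP [yb' zb'].
have r'R0 : (r'%:E < R0 rho X0 x0)%E by apply: lt_trans rR0; rewrite lte_fin.
pose V := rball rho x0 r'.
have VU : calU rho (rball rho x0 r) V := calU_rball mr r'0 r'r (@subset_refl _ _).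
have cV : calU rho X0 V := calU_rball_R0 mr r'R0.
have hVE w : rball rho x0 (alpha * r') w ->
    cintegral (mu V w) (fun t => (h t)%:E) = (h w)%:E.
  by move=> wb; exact: (hU V VU w (rball_scale_sub r'0 w wb)).2.
have := le_cintegral_dominated (mu V y) (mu V z) K (fun t => (h t)%:E) K_gt0
  (harmonic_measure_harnack X0x0 r'0 r'R0 yb' zb').
rewrite (hVE y yb') (hVE z zb') -EFinM lee_fin; apply.
- by move=> t; rewrite lee_fin h0.
- exact: umeas_fun_emeasurable (harmonic_measure_setT_lty y cV) uh.
- exact: umeas_fun_emeasurable (harmonic_measure_setT_lty z cV) uh.
Qed.

Lemma Hplus_rcont_on :
  (forall U, calU rho X0 U -> forall h, Hbplus rho mu U h -> rcont_on rho U h) ->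
  forall U, calU rho X0 U -> forall h, Hplus rho mu U h -> rcont_on rho U h.
Proof.
move=> Hbplus_cont U cU h [[uh hU] h0] x Ux.
have [r [r0 xrU]] := cU.1 x Ux.
have r40 : 0 < r / 4 by rewrite divr_gt0.
pose V := rball rho x (r / 4).
have VU : calU rho U V by apply: (calU_rball mr r40 _ xrU); lra.
have cV : calU rho X0 V := calU_trans mr cU VU.
have X0x : X0 x := calU_subset mr cU x Ux.
have r4R0 : ((r / 4)%:E < R0 rho X0 x)%E.
  apply: (lt_R0 X0 x _ (r / 2)); rewrite ?divr_gt0 //; first lra.
  apply: subset_trans (calU_subset mr cU); apply: subset_trans xrU.
  by apply: rclosure_rball_lt mr _ _ _ _; lra.
have ar_gt0 : 0 < alpha * (r / 4) by rewrite mulr_gt0.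
have xb := rball_center mr x _ ar_gt0.
have xcont := rcont_at_harmonic K_gt0 cV (Hbplus_cont V cV) ar_gt0 (rball_scale_sub r40)
  (fun y yb => harmonic_measure_harnack X0x r40 r4R0 yb xb)
  h uh h0 (fun y Vy => (hU V VU y Vy).2).
move=> e e0; have [dl dl0 hdl] := xcont e e0.
by exists dl; split => // y _; exact: hdl.
Qed.

End harnack.
End harmonic_measure.

Theorem proposition3p1 (d : measure_display) (X : measurableType d) (R : realType)
  (rho : X -> X -> R) (X0 : set X)
  (mu : set X -> X -> {measure set X -> \bar R})
  (alpha K : R) :
  is_metric rho -> rseparable rho -> rborel rho -> ropen rho X0 ->
  M0 rho X0 mu -> M1 rho X0 mu ->
  0 < alpha -> alpha < 1 -> 1 <= K ->
  (forall (x0 : X) (r : R), X0 x0 -> 0 < r -> (r%:E < R0 rho X0 x0)%E ->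
     forall h, Hbplus rho mu (rball rho x0 r) h ->
       harnack_ineq rho x0 (alpha * r) K h) ->
  (forall (x0 : X) (r : R), X0 x0 -> 0 < r -> (r%:E < R0 rho X0 x0)%E ->
     forall h, Hplus rho mu (rball rho x0 r) h ->
       harnack_ineq rho x0 (alpha * r) K h) /\
  ((forall U, calU rho X0 U -> forall h, Hbplus rho mu U h -> rcont_on rho U h) ->
   (forall U, calU rho X0 U -> forall h, Hplus rho mu U h -> rcont_on rho U h)).
Proof.
move=> mr _ _ _ hM0 hM1 alpha_gt0 alpha_lt1 K_ge1 harnack_bounded.
have K_gt0 : 0 < K by apply: lt_le_trans K_ge1.
split; last exact: (Hplus_rcont_on mr hM0 hM1 alpha_gt0 alpha_lt1 K_gt0 harnack_bounded).
move=> x0 r X0x0 r0 rR0 h hH.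
apply: (harnack_ineq_le mr (mulr_gt0 alpha_gt0 r0) K_gt0).
exact: (Hplus_harnack_le mr hM0 hM1 alpha_gt0 alpha_lt1 K_gt0 harnack_bounded _ _ _
  X0x0 r0 rR0 hH).
Qed.
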